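(* Consider an instance of the robust flow design problem on a directed graph $D=(V,A)$ with source $s$, sink $t$, capacities $u\in\mathbb{R}_+^A$, protection cost coefficients $\gamma\in\mathbb{R}_+^A$, flow player budget $B_F>0$ and interdictor budget $B_I\ge0$. Let $x$ be an optimal solution of the linear program $[\mathrm{LP}_{\mathrm{design}}]$: maximize $\sum_{P\in\mathcal{P}}\big(1-\frac{B_I}{B_F}\sum_{e\in P}\gamma_e\big)x_P$ subject to $\sum_{P\in\mathcal{P}:e\in P}x_P\le u_e$ for all $e\in A$ and $x_P\ge0$ for all $P\in\mathcal{P}$. Then $x$ is an optimal flow for the flow player in the design problem, i.e. there exist interdiction costs $c$ such that $(x,c)$ is an optimal solution of the design problem.
   Context: $\mathcal{P}$ is the set of $s$-$t$-paths in $D$ and $X=\{x\in\mathbb{R}_+^{\mathcal{P}}:\sum_{P\ni e}x_P\le u_e\ \forall e\in A\}$. In the design problem the flow player chooses $x\in X$ and interdiction costs $c\in\mathbb{R}_+^A$ subject to $\sum_{e\in A}\gamma_e c_e\sum_{P\in\mathcal{P}:e\in P}x_P\le B_F$; for arcs with $\gamma_e=0$ one has $c_e=\infty$ (flow cannot be stolen there). The interdictor then chooses $z\in\mathbb{R}_+^{A\times\mathcal{P}}$ with $\sum_{e\in A}c_e\sum_{P\ni e}z_{e,P}\le B_I$ (and $z_{e,P}=0$ if $c_e=\infty$), and the value is $\mathrm{val}(x,z)=\sum_{P\in\mathcal{P}}(x_P-\sum_{e\in P}z_{e,P})^+$. An optimal solution is a feasible pair $(x,c)$ maximizing $\min_z\mathrm{val}(x,z)$.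 *)

From HB Require Import structures.
From mathcomp Require Import all_boot all_order all_algebra.
From mathcomp Require Import classical_sets reals.
Set Implicit Arguments. Unset Strict Implicit. Unset Printing Implicit Defensive.
Import Order.TTheory GRing.Theory Num.Theory.
Local Open Scope ring_scope.
Local Open Scope classical_set_scope.

Section RobustFlow.
Variables (V A : finType) (tl hd : A -> V) (s t : V).

Fixpoint walk_to_t (v : V) (P : seq A) : bool :=
  match P with
  | [::] => v == t
  | e :: P' => (tl e == v) && walk_to_t (hd e) P'
  end.

Definition is_stpath (P : seq A) : bool :=
  walk_to_t s P && uniq (s :: map hd P).

(* the (finite) list of all s-t paths; a simple path has at most #|A| arcs *)
Definition stpaths : seq (seq A) :=
  undup [seq P <- flatten [seq [seq tval tp | tp : n.-tuple A] | n <- iota 0 #|A|.+1]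
        | is_stpath P].

Variable R : realType.

(* x is a path flow, x P being the flow on path P (values off stpaths are irrelevant) *)
Definition arc_load (x : seq A -> R) (e : A) : R :=
  \sum_(P <- stpaths | e \in P) x P.

Definition flow_feasible (u : A -> R) (x : seq A -> R) : Prop :=
  (forall P, P \in stpaths -> 0 <= x P) /\ (forall e, arc_load x e <= u e).

Definition lp_obj (gam : A -> R) (BF BI : R) (x : seq A -> R) : R :=
  \sum_(P <- stpaths) (1 - BI / BF * \sum_(e <- P) gam e) * x P.

Definition lp_optimal (u gam : A -> R) (BF BI : R) (x : seq A -> R) : Prop :=
  flow_feasible u x /\
  forall x', flow_feasible u x' -> lp_obj gam BF BI x' <= lp_obj gam BF BI x.

(* Interdiction costs c: arcs with gam e = 0 have cost +oo; this is modelled by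
   ignoring c e on such arcs (gam e * c e = 0 in the flow budget, and the
   interdictor is forbidden to use them: z e P = 0). *)
Definition design_feasible (u gam : A -> R) (BF : R) (x : seq A -> R) (c : A -> R)
  : Prop :=
  flow_feasible u x /\ (forall e, 0 <= c e) /\
  \sum_(e : A) gam e * c e * arc_load x e <= BF.

Definition interd_feasible (gam : A -> R) (BI : R) (c : A -> R) (z : A -> seq A -> R)
  : Prop :=
  (forall e P, 0 <= z e P) /\ (forall e P, gam e = 0 -> z e P = 0) /\
  \sum_(e : A) c e * arc_load (z e) e <= BI.

Definition val (x : seq A -> R) (z : A -> seq A -> R) : R :=
  \sum_(P <- stpaths) Num.max 0 (x P - \sum_(e <- P) z e P).

Definition worst_val (gam : A -> R) (BI : R) (x : seq A -> R) (c : A -> R) : R :=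
  inf [set val x z | z in [set z | interd_feasible gam BI c z]].

Definition design_optimal (u gam : A -> R) (BF BI : R) (x : seq A -> R) (c : A -> R)
  : Prop :=
  design_feasible u gam BF x c /\
  forall x' c', design_feasible u gam BF x' c' ->
    worst_val gam BI x' c' <= worst_val gam BI x c.

End RobustFlow.

From Pilot Require Import Defs.
From HB Require Import structures.
From mathcomp Require Import all_boot all_order all_algebra.
From mathcomp Require Import classical_sets reals ring.
Set Implicit Arguments. Unset Strict Implicit. Unset Printing Implicit Defensive.
Import Order.TTheory GRing.Theory Num.Theory.
Local Open Scope ring_scope.

(* Give every arc the same interdiction cost c = B_F / L, where
   L = sum_e gam_e load_x(e), so that the flow player's budget is exhausted.
   With these costs the interdictor can remove at most (B_I/B_F) L units of
   flow, so x keeps at least its LP objective.  Conversely, against any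
   feasible design (x', c') the interdictor, spreading its attack over each
   path P proportionally to gam, can remove the fraction
   min(1, (B_I/B_F) gam(P)) of the flow on P within budget; what survives is
   the LP objective of x' restricted to the paths with (B_I/B_F) gam(P) <= 1,
   an LP-feasible flow, hence at most the LP value of x. *)

Section RobustFlowDesign.
Variables (V A : finType) (tl hd : A -> V) (s t : V) (R : realType).
Variables (gam : A -> R) (BF BI : R).
Hypotheses (gam_ge0 : forall e, 0 <= gam e) (BF_gt0 : 0 < BF) (BI_ge0 : 0 <= BI).
Implicit Types (x : seq A -> R) (z : A -> seq A -> R) (c u : A -> R) (P : seq A).

Local Notation paths := (stpaths tl hd s t).
Local Notation load := (arc_load tl hd s t).
Local Notation pval := (Defs.val tl hd s t).
Local Notation worst := (worst_val tl hd s t gam BI).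
Local Notation lp := (lp_obj tl hd s t gam BF BI).
Local Notation flow_feasible := (flow_feasible tl hd s t).
Local Notation design_feasible := (design_feasible tl hd s t).
Local Notation interd_feasible := (interd_feasible tl hd s t).

Lemma stpath_uniq P : P \in paths -> uniq P.
Proof.
rewrite /stpaths mem_undup mem_filter => /andP[/andP[_ /= /andP[_ uP]] _].
exact: map_uniq uP.
Qed.

Lemma sum_stpaths_arcsE (F : A -> seq A -> R) :
  \sum_(P <- paths) \sum_(e <- P) F e P = \sum_(e : A) load (F e) e.
Proof.
transitivity (\sum_(P <- paths) \sum_(e : A) (if e \in P then F e P else 0)).
  by apply: eq_big_seq => P /stpath_uniq uP; rewrite (big_uniq _ uP) big_mkcond.
by rewrite exchange_big; apply: eq_bigr => e _; rewrite /arc_load [RHS]big_mkcond.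
Qed.

Definition weighted_load (x : seq A -> R) : R := \sum_(e : A) gam e * load x e.

Lemma weighted_loadE x :
  weighted_load x = \sum_(P <- paths) (\sum_(e <- P) gam e) * x P.
Proof.
under [RHS]eq_bigr do rewrite mulr_suml.
rewrite sum_stpaths_arcsE; apply: eq_bigr => e _.
by rewrite /arc_load mulr_sumr.
Qed.

Lemma weighted_load_ge0 x :
  (forall P, P \in paths -> 0 <= x P) -> 0 <= weighted_load x.
Proof.
move=> x0; rewrite weighted_loadE big_seq; apply: sumr_ge0 => P PS.
by rewrite mulr_ge0 ?x0 ?sumr_ge0.
Qed.

Lemma lp_objE x : lp x = \sum_(P <- paths) x P - BI / BF * weighted_load x.
Proof.
rewrite /lp_obj weighted_loadE mulr_sumr -sumrB; apply: eq_bigr => P _.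
by rewrite mulrBl mul1r mulrA.
Qed.

Lemma val_ge0 x z : 0 <= pval x z.
Proof. by apply: sumr_ge0 => P _; rewrite le_max lexx. Qed.

Lemma val_ge_diff x z :
  \sum_(P <- paths) x P - \sum_(e : A) load (z e) e <= pval x z.
Proof.
rewrite -sum_stpaths_arcsE -sumrB; apply: ler_sum => P _.
by rewrite le_max lexx orbT.
Qed.

Lemma interd_feasible0 c : interd_feasible gam BI c (fun _ _ => 0).
Proof.
split=> //; split=> //.
by rewrite big1 // => e _; rewrite /arc_load big1 ?mulr0.
Qed.

Lemma worst_val_le x c z : interd_feasible gam BI c z -> worst x c <= pval x z.
Proof.
move=> zc; apply: ge_inf; last by exists z.
by exists 0 => _ [z' _ <-]; exact: val_ge0.
Qed.

Lemma worst_val_ge x c b :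
  (forall z, interd_feasible gam BI c z -> b <= pval x z) -> b <= worst x c.
Proof.
move=> hb; apply: lb_le_inf; last by move=> _ [z zc <-]; exact: hb.
by exists (pval x (fun _ _ => 0)), (fun _ _ => 0); first exact: interd_feasible0.
Qed.

(* For L = 0 this is the junk value BF / 0 = 0. *)
Definition uniform_cost (x : seq A -> R) : A -> R := fun=> BF / weighted_load x.

Lemma uniform_cost_feasible u x :
  flow_feasible u x -> design_feasible u gam BF x (uniform_cost x).
Proof.
move=> fx; have L0 := weighted_load_ge0 fx.1.
split=> //; split=> [e|]; first by rewrite divr_ge0 // ltW.
have -> : \sum_(e : A) gam e * uniform_cost x e * load x e
          = BF / weighted_load x * weighted_load x.
  by rewrite mulr_sumr; apply: eq_bigr => e _; rewrite mulrAC mulrC.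
have [->|L_neq0] := eqVneq (weighted_load x) 0; first by rewrite mulr0 ltW.
by rewrite divfK.
Qed.

(* With L = 0 every path carrying flow consists of unprotectable arcs
   (gam = 0), on which the interdictor cannot act. *)
Lemma lp_obj_le_val_unweighted x z :
  (forall P, P \in paths -> 0 <= x P) -> weighted_load x = 0 ->
  (forall e P, gam e = 0 -> z e P = 0) -> lp x <= pval x z.
Proof.
move=> x0 L0 zgam.
have pathP0 P : P \in paths -> (\sum_(e <- P) gam e) * x P = 0.
  move: L0; rewrite weighted_loadE big_seq => /eqP.
  rewrite psumr_eq0 => [/allP hall PS|Q QS]; first by have /implyP/(_ PS)/eqP := hall P PS.
  by rewrite mulr_ge0 ?x0 ?sumr_ge0.
rewrite /lp_obj /Defs.val big_seq [leRHS]big_seq; apply: ler_sum => P PS.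
have /eqP := pathP0 P PS; rewrite mulf_eq0 => /orP[/eqP gP0|/eqP ->].
  have gP e : e \in P -> gam e = 0.
    by move: gP0 => /eqP; rewrite psumr_eq0 // => /allP gP eP; apply/eqP/gP.
  rewrite gP0 mulr0 subr0 mul1r big1_seq ?subr0 ?le_max ?lexx ?orbT //.
  by move=> e /andP[_ eP]; rewrite zgam ?gP.
by rewrite mulr0 le_max lexx.
Qed.

Lemma lp_obj_le_val_weighted x z :
  0 < weighted_load x -> interd_feasible gam BI (uniform_cost x) z ->
  lp x <= pval x z.
Proof.
move=> L_gt0 [_ [_ budget]].
rewrite lp_objE; apply: le_trans (val_ge_diff x z).
rewrite lerD2l lerN2 mulrAC ler_pdivlMr //.
rewrite -mulr_sumr in budget.
set W := \sum_(e : A) load (z e) e in budget *.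
have -> : W * BF = BF / weighted_load x * W * weighted_load x.
  by rewrite mulrAC divfK ?gt_eqF // mulrC.
by rewrite ler_wpM2r // ltW.
Qed.

Lemma lp_obj_le_worst_uniform u x :
  flow_feasible u x -> lp x <= worst x (uniform_cost x).
Proof.
move=> [x0 _]; apply: worst_val_ge => z zc.
have [L0|L_neq0] := eqVneq (weighted_load x) 0.
  exact: lp_obj_le_val_unweighted zc.2.1.
by apply: lp_obj_le_val_weighted zc; rewrite lt_def L_neq0 weighted_load_ge0.
Qed.

Definition interdict_rate (P : seq A) : R := BI / BF * \sum_(e <- P) gam e.

Definition profitable_part (x : seq A -> R) (P : seq A) : R :=
  if interdict_rate P <= 1 then x P else 0.

Definition theft_scale (P : seq A) : R :=
  if interdict_rate P <= 1 then 1 else (interdict_rate P)^-1.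

(* [Num.max 0] only matters off [stpaths], where [x] is unconstrained while
   the attack must stay nonnegative. *)
Definition theft (x : seq A -> R) (e : A) (P : seq A) : R :=
  gam e * (Num.max 0 (x P) * (BI / BF * theft_scale P)).

Lemma ratio_ge0 : 0 <= BI / BF.
Proof. by rewrite divr_ge0 // ltW. Qed.

Lemma theft_scale_itv P : 0 <= theft_scale P <= 1.
Proof.
rewrite /theft_scale; case: ifP => [_|/negbT]; first by rewrite ler01 lexx.
rewrite -ltNge => rate_gt1; have rate_gt0 := lt_trans ltr01 rate_gt1.
by rewrite invr_ge0 !ltW // invf_lt1.
Qed.

Lemma profitable_part_feasible u x :
  flow_feasible u x -> flow_feasible u (profitable_part x).
Proof.
move=> [x0 xu]; split=> [P PS|e].
  by rewrite /profitable_part; case: ifP => // _; exact: x0.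
apply: le_trans (xu e); rewrite /arc_load big_seq_cond [leRHS]big_seq_cond.
by apply: ler_sum => P /andP[PS _]; rewrite /profitable_part; case: ifP => // _; exact: x0.
Qed.

Lemma arc_load_theft_le x e :
  (forall P, P \in paths -> 0 <= x P) ->
  load (theft x e) e <= BI / BF * (gam e * load x e).
Proof.
move=> x0; rewrite /arc_load !mulr_sumr big_seq_cond [leRHS]big_seq_cond.
apply: ler_sum => P /andP[PS _]; rewrite /theft (max_r (x0 P PS)).
have /andP[_ scale_le1] := theft_scale_itv P.
have -> : gam e * (x P * (BI / BF * theft_scale P))
          = BI / BF * (gam e * x P) * theft_scale P by ring.
by rewrite ler_piMr // mulr_ge0 ?ratio_ge0 ?mulr_ge0 ?x0.
Qed.

(* The attack costs at most B_I / B_F times the flow player's protection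
   expense, which is at most B_F. *)
Lemma theft_feasible u x c :
  design_feasible u gam BF x c -> interd_feasible gam BI c (theft x).
Proof.
move=> [[x0 _] [c0 budget]]; split; last split.
- move=> e P; have /andP[scale_ge0 _] := theft_scale_itv P.
  by rewrite /theft mulr_ge0 ?gam_ge0 // mulr_ge0 ?le_max ?lexx // mulr_ge0 ?ratio_ge0.
- by move=> e P gam0; rewrite /theft gam0 mul0r.
apply: le_trans (_ : BI / BF * \sum_(e : A) gam e * c e * load x e <= BI).
  rewrite mulr_sumr; apply: ler_sum => e _.
  have -> : BI / BF * (gam e * c e * load x e)
            = c e * (BI / BF * (gam e * load x e)) by ring.
  by rewrite ler_wpM2l // arc_load_theft_le.
by apply: le_trans (ler_wpM2l ratio_ge0 budget) _; rewrite divfK ?gt_eqF.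
Qed.

Lemma val_theft x :
  (forall P, P \in paths -> 0 <= x P) -> pval x (theft x) = lp (profitable_part x).
Proof.
move=> x0; rewrite /Defs.val /lp_obj big_seq [RHS]big_seq; apply: eq_bigr => P PS.
have -> : \sum_(e <- P) theft x e P = interdict_rate P * theft_scale P * x P.
  by rewrite /theft -mulr_suml (max_r (x0 P PS)) /interdict_rate; ring.
rewrite /profitable_part /theft_scale; case: ifP => rate_le1.
  rewrite mulr1 -{1}[x P]mul1r -mulrBl max_r //.
  by rewrite mulr_ge0 ?subr_ge0 ?x0.
have rate_gt0 : 0 < interdict_rate P.
  by move/negbT: rate_le1; rewrite -ltNge; exact: lt_trans ltr01.
by rewrite mulfV ?gt_eqF // mul1r subrr maxxx mulr0.
Qed.

Lemma worst_le_lp_obj_profitable u x c :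
  design_feasible u gam BF x c -> worst x c <= lp (profitable_part x).
Proof.
move=> dx; rewrite -val_theft; last exact: dx.1.1.
exact: worst_val_le (theft_feasible dx).
Qed.

End RobustFlowDesign.

Theorem theorem2 (V A : finType) (tl hd : A -> V) (s t : V) (R : realType)
  (u gam : A -> R) (BF BI : R)
  (hu : forall e, 0 <= u e) (hgam : forall e, 0 <= gam e)
  (hBF : 0 < BF) (hBI : 0 <= BI)
  (x : seq A -> R) :
  lp_optimal tl hd s t u gam BF BI x ->
  exists c : A -> R, design_optimal tl hd s t u gam BF BI x c.
Proof.
move=> [fx x_opt]; exists (uniform_cost tl hd s t gam BF x).
split; first exact: uniform_cost_feasible.
move=> x' c' dx'.
have worst_le := worst_le_lp_obj_profitable hgam hBF hBI dx'.
have lp_le := x_opt _ (profitable_part_feasible gam BF BI dx'.1).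
exact: le_trans worst_le (le_trans lp_le (lp_obj_le_worst_uniform hgam hBF hBI fx)).
Qed.
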